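(* Let $\lambda\approx1.5214$ be the real root of $t^3-t-2$. Define a weight on monomials (compositions in $\operatorname{End}\Lambda$) in the letters $x_i,v_i$ by $\mathrm{wt}(v_i)=\lambda^i$, $\mathrm{wt}(x_i)=-\lambda^i$, extended additively over the letters of a monomial. Then for every tail monomial $r_{n-3}$ and every $n\ge 0$, $$1.3\,\lambda^{n-5}<\mathrm{wt}(r_{n-3}v_n)\le\lambda^n,$$ and for every tail monomial $r_{n-5}$ and every $n\ge2$, $$1.1\,\lambda^{n-4}<\mathrm{wt}(r_{n-5}x_{n-2}v_n)\le 2\lambda^{n-3}.$$
   Context: $\Lambda$ is the Grassmann algebra on odd generators $x_0,x_1,\dots$, $x_i$ acting by left multiplication; $v_i=\sum_{k\ge0}\big(\prod_{n=0}^{k-1}x_{i+3n}x_{i+3n+1}\big)\partial_{i+3k}$ where $\partial_i$ is the superderivation with $\partial_i(x_j)=\delta_{ij}$. A tail monomial is $r_m=x_0^{\xi_0}\cdots x_m^{\xi_m}$, $\xi_i\in\{0,1\}$, with $r_m=1$ for $m<0$ (weight $0$). *)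

From HB Require Import structures.
From mathcomp Require Import all_boot all_order all_algebra.
From mathcomp Require Import reals.
Set Implicit Arguments. Unset Strict Implicit. Unset Printing Implicit Defensive.
Import Order.TTheory GRing.Theory Num.Theory.
Local Open Scope ring_scope.

(* Letters of monomials in End(Lambda): x_i (left multiplication) and v_i. *)
Inductive letter := LX of nat | LV of nat.

Definition monomial := seq letter.

Definition wt_letter (R : ringType) (lam : R) (a : letter) : R :=
  match a with LX i => - lam ^+ i | LV i => lam ^+ i end.

Definition wt (R : ringType) (lam : R) (w : monomial) : R :=
  \sum_(a <- w) wt_letter lam a.

(* Tail monomial r_m = x_0^{xi_0} ... x_m^{xi_m}, written here as
   tail xi k = r_{k-1} (indices i < k); tail xi 0 = 1 (empty word),
   which covers r_m = 1 for m < 0. *)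
Definition tail (xi : nat -> bool) (k : nat) : monomial :=
  [seq LX i | i <- iota 0 k & xi i].

From HB Require Import structures.
From mathcomp Require Import all_boot all_order all_algebra.
From mathcomp Require Import reals.
From mathcomp Require Import ring lra zify.
Import Order.TTheory GRing.Theory Num.Theory.
Set Implicit Arguments. Unset Strict Implicit. Unset Printing Implicit Defensive.
Local Open Scope ring_scope.

(* The tail r_{k-1} has weight -(sum of lam^i over the i < k with xi_i set),
   which lies in (-lam^k / (lam - 1), 0].  The upper bounds drop the tail.  For
   the lower bounds, wt(v_n) = lam^5 lam^(n-5) and, because lam^3 - lam = 2,
   wt(x_(n-2) v_n) = 2 lam lam^(n-4); after dividing by lam^(n-5) resp.
   lam^(n-4) they become lam^3 <= (lam - 1)(lam^5 - 1.3) and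
   1 <= (lam - 1)(2 lam - 1.1), which hold because 1.52 < lam < 1.53. *)

Lemma wt_cat (R : nzRingType) (lam : R) (u w : monomial) :
  wt lam (u ++ w) = wt lam u + wt lam w.
Proof. by rewrite /wt big_cat. Qed.

Lemma wt_seq1 (R : nzRingType) (lam : R) (a : letter) :
  wt lam [:: a] = wt_letter lam a.
Proof. by rewrite /wt big_seq1. Qed.

Lemma oppr_wt_tail (R : nzRingType) (lam : R) xi k :
  - wt lam (tail xi k) = \sum_(i < k | xi i) lam ^+ i.
Proof.
rewrite /wt /tail big_map big_filter -sumrN -big_mkord /index_iota subn0.
by apply: eq_bigr => i _; rewrite opprK.
Qed.

Lemma exprzBnK (R : unitRingType) (x : R) (m : int) (k : nat) :
  x \is a GRing.unit -> x ^ (m - k%:Z) * x ^+ k = x ^ m.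
Proof. by move=> ux; rewrite exprnP -exprzDr // subrK. Qed.

Lemma wt_tail_le0 (R : numDomainType) (lam : R) xi k :
  0 <= lam -> wt lam (tail xi k) <= 0.
Proof.
move=> lam_ge0; rewrite -oppr_ge0 oppr_wt_tail.
by apply: sumr_ge0 => i _; apply: exprn_ge0.
Qed.

Lemma wt_tail_ge (R : numDomainType) (lam : R) xi k :
  1 <= lam -> (lam - 1) * - wt lam (tail xi k) <= lam ^+ k - 1.
Proof.
move=> lam_ge1; have lam_ge0 : 0 <= lam := le_trans ler01 lam_ge1.
rewrite subrX1 oppr_wt_tail big_mkcond /= ler_wpM2l ?subr_ge0 //.
by apply: ler_sum => i _; case: (xi i); rewrite ?exprn_ge0.
Qed.

(* The integer exponent makes this hold also for j > n, where the tail is empty. *)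
Lemma wt_tail_lt (R : numFieldType) (lam : R) xi n j : 1 <= lam ->
  (lam - 1) * - wt lam (tail xi (n - j)) < lam ^ (n%:Z - j%:Z).
Proof.
move=> lam_ge1; have [le_jn | lt_nj] := leqP j n.
  by rewrite subzn // -exprnP (le_lt_trans (wt_tail_ge _ _ lam_ge1)) // ltrBlDr ltrDl.
have -> : (n - j = 0)%N by lia.
by rewrite /tail /wt big_nil oppr0 mulr0 exprz_gt0 // (lt_le_trans ltr01).
Qed.

Lemma wt_tail_addr_gt (R : realFieldType) (lam : R) xi n j (c kappa P : R) :
    1 < lam -> 0 <= P -> lam ^ (n%:Z - j%:Z) <= (lam - 1) * (c - kappa) * P ->
  kappa * P < c * P + wt lam (tail xi (n - j)).
Proof.
move=> lam_gt1 P_ge0 hP; have tail_lt := wt_tail_lt xi n j (ltW lam_gt1).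
rewrite -subr_gt0 -(pmulr_rgt0 _ (_ : 0 < lam - 1)) ?subr_gt0 //.
have -> : (lam - 1) * (c * P + wt lam (tail xi (n - j)) - kappa * P) =
  (lam - 1) * (c - kappa) * P - (lam - 1) * - wt lam (tail xi (n - j)) by ring.
lra.
Qed.

Lemma ltr_cubic (R : realFieldType) (a b : R) :
  4 < 3 * a ^+ 2 -> (a < b) = (a ^+ 3 - a < b ^+ 3 - b).
Proof.
move=> ha; set q := (b + a / 2) ^+ 2 + (3 * a ^+ 2 / 4 - 1).
have q_gt0 : 0 < q by rewrite /q; have := sqr_ge0 (b + a / 2); lra.
rewrite -subr_gt0 -[RHS]subr_gt0.
have -> : b ^+ 3 - b - (a ^+ 3 - a) = (b - a) * q by rewrite /q; field.
by rewrite pmulr_lgt0.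
Qed.

Lemma cubic_root_bounds (R : realFieldType) (lam : R) :
  lam ^+ 3 - lam - 2 = 0 -> 152 / 100 < lam < 153 / 100.
Proof.
move=> root; have lam3 : lam ^+ 3 - lam = 2 by lra.
have lam_gt : 152 / 100 < lam by rewrite ltr_cubic ?lam3 !exprS expr0; lra.
by rewrite lam_gt ltr_cubic ?lam3 !exprS expr0; nra.
Qed.

Section CubicRoot.

Variables (R : realFieldType) (lam : R).

Lemma root_unit : lam ^+ 3 - lam - 2 = 0 -> lam \is a GRing.unit.
Proof. by move=> /cubic_root_bounds/andP[lam_gt _]; apply: unitf_gt0; lra. Qed.

Lemma root_v_margin :
  lam ^+ 3 - lam - 2 = 0 -> lam ^+ 3 <= (lam - 1) * (lam ^+ 5 - 13 / 10).
Proof.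
move=> root; have /andP[lam_gt lam_lt] := cubic_root_bounds root.
have -> : lam ^+ 5 = lam ^+ 2 * lam ^+ 3 by rewrite -exprD.
have -> : lam ^+ 3 = lam + 2 by lra.
rewrite expr2; nra.
Qed.

Lemma root_xv_margin : lam ^+ 3 - lam - 2 = 0 -> 1 <= (lam - 1) * (2 * lam - 11 / 10).
Proof. by move=> /cubic_root_bounds/andP[lam_gt _]; nra. Qed.

Lemma wt_root_xv n : lam ^+ 3 - lam - 2 = 0 -> (2 <= n)%N ->
  wt lam [:: LX (n - 2); LV n] = 2 * lam ^ (n%:Z - 3).
Proof.
move=> root n_ge2; have lam_unit := root_unit root.
have lam_n : lam ^+ n = lam ^ (n%:Z - 3) * lam ^+ 3 := esym (exprzBnK n 3 lam_unit).
have lam_n2 : lam ^+ (n - 2) = lam ^ (n%:Z - 3) * lam.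
  by rewrite exprnP -subzn // -(exprzBnK _ 1 lam_unit) -addrA.
rewrite /wt big_cons big_seq1 /= lam_n lam_n2.
have -> : lam ^+ 3 = lam + 2 by lra.
ring.
Qed.

End CubicRoot.

Section TailBounds.

Variables (R : realFieldType) (lam : R) (xi : nat -> bool) (n : nat).

Lemma wt_tail_v_bounds : lam ^+ 3 - lam - 2 = 0 ->
     13 / 10 * lam ^ (n%:Z - 5) < wt lam (tail xi (n - 2) ++ [:: LV n])
  /\ wt lam (tail xi (n - 2) ++ [:: LV n]) <= lam ^+ n.
Proof.
move=> root; have /andP[lam_gt _] := cubic_root_bounds root.
have lam_ge0 : 0 <= lam by lra.
have lam_unit := root_unit root.
have tail_le0 := wt_tail_le0 xi (n - 2) lam_ge0.
rewrite wt_cat wt_seq1 /=; split; last by lra.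
have lam_n : lam ^+ n = lam ^+ 5 * lam ^ (n%:Z - 5).
  by rewrite mulrC; exact: esym (exprzBnK n 5 lam_unit).
have lam_n2 : lam ^ (n%:Z - 2) = lam ^+ 3 * lam ^ (n%:Z - 5).
  by rewrite mulrC -(exprzBnK (n%:Z - 2) 3 lam_unit) -addrA.
rewrite lam_n [ltRHS]addrC.
apply: wt_tail_addr_gt; rewrite ?exprz_ge0 //; first lra.
by rewrite lam_n2 ler_wpM2r ?exprz_ge0 ?root_v_margin.
Qed.

Lemma wt_tail_xv_bounds : lam ^+ 3 - lam - 2 = 0 -> (2 <= n)%N ->
     11 / 10 * lam ^ (n%:Z - 4) < wt lam (tail xi (n - 4) ++ [:: LX (n - 2); LV n])
  /\ wt lam (tail xi (n - 4) ++ [:: LX (n - 2); LV n]) <= 2 * lam ^ (n%:Z - 3).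
Proof.
move=> root n_ge2; have /andP[lam_gt _] := cubic_root_bounds root.
have lam_ge0 : 0 <= lam by lra.
have tail_le0 := wt_tail_le0 xi (n - 4) lam_ge0.
rewrite wt_cat wt_root_xv //; split; last by lra.
have lam_n3 : lam ^ (n%:Z - 3) = lam * lam ^ (n%:Z - 4).
  by rewrite mulrC -(exprzBnK (n%:Z - 3) 1 (root_unit root)) -addrA.
rewrite lam_n3 mulrA [ltRHS]addrC.
apply: wt_tail_addr_gt; rewrite ?exprz_ge0 //; first lra.
by rewrite ler_peMl ?exprz_ge0 ?root_xv_margin.
Qed.

End TailBounds.

Theorem lemma8p1 (R : realType) (lam : R) (hlam : lam ^+ 3 - lam - 2 = 0) :
  (forall (xi : nat -> bool) (n : nat),
      (13 / 10) * lam ^ (n%:Z - 5) < wt lam (tail xi (n - 2) ++ [:: LV n])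
   /\ wt lam (tail xi (n - 2) ++ [:: LV n]) <= lam ^+ n)
  /\
  (forall (xi : nat -> bool) (n : nat), (2 <= n)%N ->
      (11 / 10) * lam ^ (n%:Z - 4) < wt lam (tail xi (n - 4) ++ [:: LX (n - 2); LV n])
   /\ wt lam (tail xi (n - 4) ++ [:: LX (n - 2); LV n]) <= 2 * lam ^ (n%:Z - 3)).
Proof.
split=> xi n; first exact: wt_tail_v_bounds.
exact: wt_tail_xv_bounds.
Qed.
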